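(* Let $\phi$ be a 3SAT instance on variables $s_1,\dots,s_n$ with clauses $C_1,\dots,C_m$, each clause being a disjunction of exactly three literals. Let $\mathcal{G}=\mathcal{G}(\phi)$ be the edge-weighted graph defined in the context. Then $\phi$ is satisfiable if and only if $\mathcal{G}$ has a realization in $\mathbb{R}$, i.e. a map $x:V(\mathcal{G})\to\mathbb{R}$ with $|x_u-x_v|=d_{uv}$ for every edge $\{u,v\}$.
   Context: The graph $\mathcal{G}(\phi)$ has vertex set consisting of: two vertices $\mathsf{A},\mathsf{B}$; for each variable $s_j$ ($j\le n$) two literal vertices, denoted $s_j$ and $\bar s_j$; and for each clause $i\le m$ eight new vertices $c_{i1},\dots,c_{i8}$. For clause $i$ and $h\in\{1,2,3\}$, let $\mathsf{L}_{ih}$ denote the literal vertex ($s_j$ or $\bar s_j$) of the $h$-th literal of clause $i$. Edges with weights: $\{\mathsf{A},\mathsf{B}\}$ weight 2; for each $j\le n$: $\{s_j,\bar s_j\}$ weight 2, $\{\mathsf{A},s_j\}$ weight 1, $\{\mathsf{A},\bar s_j\}$ weight 1. For each clause $i\le m$: $\{\mathsf{A},c_{i2}\}$ weight 4, $\{\mathsf{A},c_{i7}\}$ weight 2, $\{\mathsf{L}_{i1},c_{i2}\}$ weight 3, $\{\mathsf{L}_{i2},c_{i7}\}$ weight 1, $\{c_{i2},c_{i4}\}$ weight 2, $\{c_{i7},c_{i3}\}$ weight 4, $\{\mathsf{B},c_{i1}\}$ weight 4, $\{c_{i1},c_{i5}\}$ weight 2, $\{c_{i5},c_{i6}\}$ weight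 1, $\{c_{i3},c_{i6}\}$ weight 1, $\{c_{i4},c_{i6}\}$ weight 1, $\{\mathsf{L}_{i3},c_{i8}\}$ weight 4, $\{c_{i6},c_{i8}\}$ weight 2 (edges $\{\mathsf{A},\mathsf{L}_{ih}\}$ of weight 1 are already present). A truth assignment corresponds to positions via: $x_\mathsf{A}=0$, $x_\mathsf{B}=2$, and literal vertex at $1$ means TRUE, at $-1$ means FALSE. *)

From mathcomp Require Import all_boot.
From Stdlib Require Import Reals.
Set Implicit Arguments. Unset Strict Implicit. Unset Printing Implicit Defensive.

Open Scope R_scope.

(* A literal over variables s_0..s_{n-1}: (j, true) is s_j, (j, false) is ~s_j. *)
Definition lit (n : nat) : Type := ('I_n * bool)%type.

Definition cnf3 (n m : nat) : Type := 'I_m -> 'I_3 -> lit n.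

Definition lit_true n (a : 'I_n -> bool) (l : lit n) : bool := a l.1 == l.2.

Definition satisfiable n m (phi : cnf3 n m) : Prop :=
  exists a : 'I_n -> bool, forall i : 'I_m, exists h : 'I_3, lit_true a (phi i h).

(* Vertices of G(phi): A, B, literal vertices (Lv j true = s_j, Lv j false = bar s_j),
   clause vertices Cv i k = c_{i,k+1} for k : 'I_8. *)
Inductive vtx (n m : nat) : Type :=
| vA : vtx n m
| vB : vtx n m
| Lv : 'I_n -> bool -> vtx n m
| Cv : 'I_m -> 'I_8 -> vtx n m.
Arguments vA {n m}. Arguments vB {n m}.

Definition litv n m (l : lit n) : vtx n m := Lv m l.1 l.2.

Definition cv n m (i : 'I_m) (k : nat) : vtx n m := Cv n i (inord k.-1).

Inductive edge n m (phi : cnf3 n m) : vtx n m -> vtx n m -> R -> Prop :=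
| e_AB : edge phi vA vB 2
| e_lit (j : 'I_n) : edge phi (Lv m j true) (Lv m j false) 2
| e_Alit (j : 'I_n) (b : bool) : edge phi vA (Lv m j b) 1
| e_A_c2 (i : 'I_m) : edge phi vA (cv n i 2) 4
| e_A_c7 (i : 'I_m) : edge phi vA (cv n i 7) 2
| e_L1_c2 (i : 'I_m) : edge phi (litv m (phi i (@inord 2 0))) (cv n i 2) 3
| e_L2_c7 (i : 'I_m) : edge phi (litv m (phi i (@inord 2 1))) (cv n i 7) 1
| e_c2_c4 (i : 'I_m) : edge phi (cv n i 2) (cv n i 4) 2
| e_c7_c3 (i : 'I_m) : edge phi (cv n i 7) (cv n i 3) 4
| e_B_c1 (i : 'I_m) : edge phi vB (cv n i 1) 4
| e_c1_c5 (i : 'I_m) : edge phi (cv n i 1) (cv n i 5) 2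
| e_c5_c6 (i : 'I_m) : edge phi (cv n i 5) (cv n i 6) 1
| e_c3_c6 (i : 'I_m) : edge phi (cv n i 3) (cv n i 6) 1
| e_c4_c6 (i : 'I_m) : edge phi (cv n i 4) (cv n i 6) 1
| e_L3_c8 (i : 'I_m) : edge phi (litv m (phi i (@inord 2 2))) (cv n i 8) 4
| e_c6_c8 (i : 'I_m) : edge phi (cv n i 6) (cv n i 8) 2.

Definition realization n m (phi : cnf3 n m) (x : vtx n m -> R) : Prop :=
  forall u v d, edge phi u v d -> Rabs (x u - x v) = d.

Definition realizable n m (phi : cnf3 n m) : Prop :=
  exists x : vtx n m -> R, realization phi x.

(* Pin A at 0 and B at 2 (a reflection and a translation make this possible); then every
   literal vertex sits at 1 or -1 and the two literals of a variable sit on opposite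
   sides, so positions are exactly truth assignments.  The eight vertices of a clause
   gadget can then be placed if and only if at least one of its three literal vertices
   is at 1: with all three at -1, c2 = -4 and c7 = -2 push c6 down to -7, while
   c1 in {-2, 6} keeps c6 >= -5. *)

From mathcomp Require Import all_boot.
From Stdlib Require Import Reals Lra.

Set Implicit Arguments.
Unset Strict Implicit.

Open Scope R_scope.

Definition pos_of_bool (b : bool) : R := if b then 1 else -1.

Lemma Rabs_eq_cases z d : Rabs z = d -> z = d \/ z = - d.
Proof. by rewrite /Rabs; case: Rcase_abs; lra. Qed.

Ltac solve_Rabs := rewrite /Rabs; case: Rcase_abs; lra.

Definition clause_gadget (A B L1 L2 L3 c1 c2 c3 c4 c5 c6 c7 c8 : R) : Prop :=
  Rabs (A - c2) = 4 /\ Rabs (A - c7) = 2 /\ Rabs (L1 - c2) = 3 /\ Rabs (L2 - c7) = 1 /\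
  Rabs (c2 - c4) = 2 /\ Rabs (c7 - c3) = 4 /\ Rabs (B - c1) = 4 /\ Rabs (c1 - c5) = 2 /\
  Rabs (c5 - c6) = 1 /\ Rabs (c3 - c6) = 1 /\ Rabs (c4 - c6) = 1 /\
  Rabs (L3 - c8) = 4 /\ Rabs (c6 - c8) = 2.

Lemma clause_gadget_all_false c1 c2 c3 c4 c5 c6 c7 c8 :
  ~ clause_gadget 0 2 (-1) (-1) (-1) c1 c2 c3 c4 c5 c6 c7 c8.
Proof.
move=> [/Rabs_eq_cases A2 [/Rabs_eq_cases A7 [/Rabs_eq_cases L12 [/Rabs_eq_cases L27
  [/Rabs_eq_cases E24 [/Rabs_eq_cases E73 [/Rabs_eq_cases B1 [/Rabs_eq_cases E15
  [/Rabs_eq_cases E56 [/Rabs_eq_cases E36 [/Rabs_eq_cases E46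
  [/Rabs_eq_cases L38 /Rabs_eq_cases E68]]]]]]]]]]]].
have c2E : c2 = -4 by lra.
have c7E : c7 = -2 by lra.
have c6_low : c6 = -7 \/ c6 = -5.
  by case: E24 => E24; case: E73 => E73; case: E36 => E36; case: E46 => E46; lra.
have c6E : c6 = -7 by case: c6_low => c6_low; case: L38 => L38; case: E68; lra.
have c6_ge : -5 <= c6 by case: B1 => B1; case: E15 => E15; case: E56; lra.
lra.
Qed.

(* Entry k is the position of c_(k+1) when the clause's literals have truth values t1, t2, t3. *)
Definition clause_witness (t1 t2 t3 : bool) : seq R :=
  match t1, t2, t3 with
  | true, true, true => [:: 6; 4; 6; 6; 8; 7; 2; 5]
  | true, true, false => [:: 6; 4; 6; 6; 4; 5; 2; 3]
  | true, false, true => [:: 6; 4; 2; 2; 4; 3; -2; 5]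
  | true, false, false => [:: -2; 4; 2; 2; 0; 1; -2; 3]
  | false, true, true => [:: -2; -4; -2; -2; 0; -1; 2; -3]
  | false, true, false => [:: -2; -4; -2; -2; -4; -3; 2; -5]
  | false, false, _ => [:: -2; -4; -6; -6; -4; -5; -2; -3]
  end.

Lemma clause_gadget_witness t1 t2 t3 : [|| t1, t2 | t3] ->
  let c k := nth 0 (clause_witness t1 t2 t3) k in
  clause_gadget 0 2 (pos_of_bool t1) (pos_of_bool t2) (pos_of_bool t3)
    (c 0%nat) (c 1%nat) (c 2%nat) (c 3%nat) (c 4%nat) (c 5%nat) (c 6%nat) (c 7%nat).
Proof.
by case: t1; case: t2; case: t3 => //= _;
  rewrite /clause_gadget /pos_of_bool /=; repeat split; solve_Rabs.
Qed.

Section Realizations.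

Variables (n m : nat) (phi : cnf3 n m).

Lemma realization_isometry (x : vtx n m -> R) (s c : R) :
  Rabs s = 1 -> realization phi x -> realization phi (fun u => s * x u + c).
Proof.
move=> s1 x_real u v d /x_real <-.
have -> : s * x u + c - (s * x v + c) = s * (x u - x v) by ring.
by rewrite Rabs_mult s1 Rmult_1_l.
Qed.

Lemma realizable_normalized :
  realizable phi -> exists y, [/\ realization phi y, y vA = 0 & y vB = 2].
Proof.
move=> [x x_real].
have /Rabs_eq_cases AB := x_real _ _ _ (e_AB phi).
pose s := (x vB - x vA) / 2.
have s_unit : s = 1 \/ s = -1 by rewrite /s; lra.
have s1 : Rabs s = 1 by case: s_unit => ->; solve_Rabs.
exists (fun u => s * x u - s * x vA); split.
- exact: realization_isometry.
- ring.
- by case: s_unit => s_val; rewrite s_val; move: s_val; rewrite /s; lra.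
Qed.

Definition gadget_at (x : vtx n m -> R) (i : 'I_m) : Prop :=
  let L h := x (litv m (phi i (@inord 2 h))) in
  let c k := x (cv n i k) in
  clause_gadget (x vA) (x vB) (L 0%nat) (L 1%nat) (L 2%nat)
    (c 1%nat) (c 2%nat) (c 3%nat) (c 4%nat) (c 5%nat) (c 6%nat) (c 7%nat) (c 8%nat).

Lemma realization_gadget_at (x : vtx n m -> R) :
  realization phi x -> forall i, gadget_at x i.
Proof. by move=> x_real i; do !split; apply: x_real; constructor. Qed.

Section FromAssignment.

Variable a : 'I_n -> bool.

Let clause_truth (i : 'I_m) (h : nat) : bool := lit_true a (phi i (@inord 2 h)).

Definition realization_of_assignment (v : vtx n m) : R :=
  match v with
  | vA => 0
  | vB => 2
  | Lv j b => pos_of_bool (a j == b)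
  | Cv i k =>
    nth 0 (clause_witness (clause_truth i 0) (clause_truth i 1) (clause_truth i 2)) k
  end.

Lemma gadget_at_assignment (i : 'I_m) :
  (exists h, lit_true a (phi i h)) -> gadget_at realization_of_assignment i.
Proof.
move=> [h true_h].
have some_true : [|| clause_truth i 0, clause_truth i 1 | clause_truth i 2].
  rewrite -[h]inord_val in true_h.
  by case: h true_h => [[|[|[|k]]] ?] //= true_h; rewrite /clause_truth true_h ?orbT.
have := clause_gadget_witness some_true.
by rewrite /gadget_at /cv /= !inordK.
Qed.

Lemma realization_of_satisfying_assignment :
  (forall i, exists h, lit_true a (phi i h)) -> realization phi realization_of_assignment.
Proof.
move=> a_sat u v d; case=> [|j|j b|i|i|i|i|i|i|i|i|i|i|i|i|i] /=.
- solve_Rabs.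
- by rewrite /pos_of_bool; case: (a j) => /=; solve_Rabs.
- by rewrite /pos_of_bool; case: (a j == b); solve_Rabs.
all: by have := gadget_at_assignment (a_sat i); rewrite /gadget_at /clause_gadget; tauto.
Qed.

End FromAssignment.

Variable y : vtx n m -> R.
Hypotheses (y_real : realization phi y) (yA : y vA = 0) (yB : y vB = 2).

Definition assignment_of_realization (j : 'I_n) : bool :=
  if Req_EM_T (y (Lv m j true)) 1 then true else false.

Lemma literal_position (l : lit n) :
  y (litv m l) = pos_of_bool (lit_true assignment_of_realization l).
Proof.
case: l => j b; rewrite /litv /lit_true /assignment_of_realization /pos_of_bool /=.
have unit_pos b' : y (Lv m j b') = 1 \/ y (Lv m j b') = -1.
  by have /Rabs_eq_cases := y_real (e_Alit phi j b'); rewrite yA; lra.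
have /Rabs_eq_cases opposite := y_real (e_lit phi j).
have := unit_pos true; have := unit_pos false.
by case: Req_EM_T; case: b => /=; lra.
Qed.

Lemma assignment_of_realization_satisfies (i : 'I_m) :
  exists h, lit_true assignment_of_realization (phi i h).
Proof.
apply/existsP; apply: contraT; rewrite negb_exists => /forallP all_false.
have := realization_gadget_at y_real i.
rewrite /gadget_at; cbv zeta.
rewrite yA yB !literal_position !(negbTE (all_false _)).
by move=> /clause_gadget_all_false.
Qed.

End Realizations.

Theorem theorem1 (n m : nat) (phi : cnf3 n m) :
  satisfiable phi <-> realizable phi.
Proof.
split.
- move=> [a a_sat].
  exists (realization_of_assignment phi a).
  exact: realization_of_satisfying_assignment.
- move=> /realizable_normalized [y [y_real yA yB]].
  exists (assignment_of_realization y).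
  exact: assignment_of_realization_satisfies.
Qed.
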